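(* Let $\Bbbk$ be a field, $V$ a finite-dimensional $\Bbbk$-vector space with $\dim V>1$ and $R$ a Hecke symmetry on $V$ with parameter $q$. Suppose $\dim\Upsilon^{(3)}=1$. Then the action of $y_3$ on $V^{\otimes3}$ is nonzero.
   Context: A Hecke symmetry on $V$ with parameter $0\neq q\in\Bbbk$ is a linear map $R:V\otimes V\to V\otimes V$ satisfying $(R\otimes\mathrm{Id}_V)(\mathrm{Id}_V\otimes R)(R\otimes\mathrm{Id}_V)=(\mathrm{Id}_V\otimes R)(R\otimes\mathrm{Id}_V)(\mathrm{Id}_V\otimes R)$ and $(R-q\,\mathrm{Id})(R+\mathrm{Id})=0$ ($q=-1$ allowed). On $V^{\otimes 3}$ let $R_1=R\otimes\mathrm{Id}_V$, $R_2=\mathrm{Id}_V\otimes R$. $\Upsilon^{(3)}=(R_1-q\,\mathrm{Id})V^{\otimes3}\cap(R_2-q\,\mathrm{Id})V^{\otimes3}$. $y_3=\sum_{\sigma\in S_3}(-1)^{\ell(\sigma)}q^{3-\ell(\sigma)}T_\sigma$ in the Hecke algebra ${\cal H}_3$ (generators $T_1,T_2$, relations $T_1T_2T_1=T_2T_1T_2$, $(T_i-q)(T_i+1)=0$; $T_\sigma$ is the product of generators along a reduced expression of $\sigma$ in $\tau_1=(12),\tau_2=(23)$, $\ell$ the length), acting on $V^{\otimes3}$ via $T_i\mapsto R_i$. Explicitly $y_3=q^3-q^2(T_1+T_2)+q(T_1T_2+T_2T_1)-T_1T_2T_1$. *)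

(* V = 'rV[F]_n (row vectors, linear maps act on the right:
   v |-> v *m A), V^{(x)2} = 'rV_(n*n), V^{(x)3} = 'rV_(n*n*n), using the
   standard Kronecker tensor product of matrices [A *t B] from
   mathcomp.real_closed.mxtens (index (i,j) |-> i*p + j). *)
From HB Require Import structures.
From mathcomp Require Import all_boot all_order all_algebra.
From mathcomp Require Import mxtens.
Set Implicit Arguments. Unset Strict Implicit. Unset Printing Implicit Defensive.
Import GRing.Theory.
Local Open Scope ring_scope.

Definition hR1 (F : fieldType) (n : nat) (R : 'M[F]_(n * n)) : 'M[F]_(n * n * n) :=
  R *t (1%:M : 'M[F]_n).

(* R_2 = Id_V (x) R on V^{(x)3} = V (x) (V (x) V), transported to (V (x) V) (x) V
   by the associativity identification (indices agree: (i*n+j)*n+k = i*(n*n)+(j*n+k)). *)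
Definition hR2 (F : fieldType) (n : nat) (R : 'M[F]_(n * n)) : 'M[F]_(n * n * n) :=
  castmx (mulnA n n n, mulnA n n n) ((1%:M : 'M[F]_n) *t R).

Definition is_hecke_symmetry (F : fieldType) (n : nat) (q : F) (R : 'M[F]_(n * n)) :=
  hR1 R *m hR2 R *m hR1 R = hR2 R *m hR1 R *m hR2 R /\
  (R - q%:M) *m (R + 1%:M) = 0.

Definition Upsilon3 (F : fieldType) (n : nat) (q : F) (R : 'M[F]_(n * n)) :=
  ((hR1 R - q%:M) :&: (hR2 R - q%:M))%MS.

Definition y3_action (F : fieldType) (n : nat) (q : F) (R : 'M[F]_(n * n)) : 'M[F]_(n * n * n) :=
  q ^+ 3 *: 1%:M - q ^+ 2 *: (hR1 R + hR2 R)
  + q *: (hR1 R *m hR2 R + hR2 R *m hR1 R) - hR1 R *m hR2 R *m hR1 R.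

(* Suppose y3 acts by 0
   and pick u <> 0 in Upsilon3.  Since y3 = (q - T1)(q^2 - q T2 + T2 T1) and
   u = y (R1 - q) is a (-1)-eigenvector of R1 and R2, we get
   0 = y y3 = -(q^2 + q + 1) u, so q is a primitive cube root of unity; in
   particular q <> -1 and Upsilon3 is the common (-1)-eigenspace of R1, R2.
   In V^(x)4, with S1, S2, S3 the three copies of R, the vectors X = u (x) v
   are (-1)-eigenvectors of S1, S2, and the braid relation together with
   X y3(S2, S3) = 0 forces X S3 = -X.  So for any nonzero slice b of u along
   its first factor, every b (x) v is again a (-1)-eigenvector of R1 and R2,
   i.e. lies in Upsilon3, and dim Upsilon3 >= dim V > 1. *)

From HB Require Import structures.
From mathcomp Require Import all_boot all_order all_algebra.
From mathcomp Require Import mxtens ring.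
Set Implicit Arguments.
Unset Strict Implicit.
Unset Printing Implicit Defensive.
Import GRing.Theory.
Local Open Scope ring_scope.

Section TensorProduct.

Variable K : comPzRingType.

Lemma tensmxDl m n p r (A B : 'M[K]_(m, n)) (C : 'M[K]_(p, r)) :
  (A + B) *t C = A *t C + B *t C.
Proof. by apply/matrixP => i j; rewrite !mxE mulrDl. Qed.

Lemma tensmxBl m n p r (A B : 'M[K]_(m, n)) (C : 'M[K]_(p, r)) :
  (A - B) *t C = A *t C - B *t C.
Proof. by apply/matrixP => i j; rewrite !mxE mulrBl. Qed.

Lemma tensmxNl m n p r (A : 'M[K]_(m, n)) (C : 'M[K]_(p, r)) :
  (- A) *t C = - (A *t C).
Proof. by apply/matrixP => i j; rewrite !mxE mulNr. Qed.

Lemma tensmxDr m n p r (A : 'M[K]_(m, n)) (B C : 'M[K]_(p, r)) :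
  A *t (B + C) = A *t B + A *t C.
Proof. by apply/matrixP => i j; rewrite !mxE mulrDr. Qed.

Lemma tensmxBr m n p r (A : 'M[K]_(m, n)) (B C : 'M[K]_(p, r)) :
  A *t (B - C) = A *t B - A *t C.
Proof. by apply/matrixP => i j; rewrite !mxE mulrBr. Qed.

Lemma tensmxZr m n p r a (A : 'M[K]_(m, n)) (C : 'M[K]_(p, r)) :
  A *t (a *: C) = a *: (A *t C).
Proof. by apply/matrixP => i j; rewrite !mxE mulrCA. Qed.

Lemma scalar_tensmx m n (a b : K) :
  (a%:M : 'M_m) *t (b%:M : 'M_n) = (a * b)%:M.
Proof.
apply/matrixP => i j.
case: (mxtens_indexP i) => i1 i2; case: (mxtens_indexP j) => j1 j2.
rewrite tensmxE !mxE (can_eq (@mxtens_indexK _ _)) xpair_eqE.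
by case: eqP; case: eqP; rewrite ?(mulr0n, mulr1n, mulr0, mul0r).
Qed.

Lemma tensmxA m1 n1 m2 n2 m3 n3
    (A : 'M[K]_(m1, n1)) (B : 'M[K]_(m2, n2)) (C : 'M[K]_(m3, n3)) :
  (A *t B) *t C = castmx (mulnA m1 m2 m3, mulnA n1 n2 n3) (A *t (B *t C)).
Proof.
have idxA p1 p2 p3 (i1 : 'I_p1) (i2 : 'I_p2) (i3 : 'I_p3) :
    cast_ord (esym (mulnA p1 p2 p3)) (mxtens_index (mxtens_index (i1, i2), i3))
    = mxtens_index (i1, mxtens_index (i2, i3)).
  by apply: val_inj; rewrite /= mulnDl mulnA addnA.
apply/matrixP => i j.
case: (mxtens_indexP i) => i12 i3; case: (mxtens_indexP i12) => i1 i2.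
case: (mxtens_indexP j) => j12 j3; case: (mxtens_indexP j12) => j1 j2.
by rewrite castmxE /= !idxA !tensmxE mulrA.
Qed.

Lemma castmx_tensl m n m' n' p r (em : m = m') (en : n = n')
    (A : 'M[K]_(m, n)) (C : 'M[K]_(p, r)) :
  castmx (em, en) A *t C
  = castmx (congr1 (muln^~ p) em, congr1 (muln^~ r) en) (A *t C).
Proof. by case: m' / em; case: n' / en; rewrite !castmx_id. Qed.

Lemma castmx_tensr m n m' n' p r (em : m = m') (en : n = n')
    (A : 'M[K]_(m, n)) (C : 'M[K]_(p, r)) :
  C *t castmx (em, en) A
  = castmx (congr1 (muln p) em, congr1 (muln r) en) (C *t A).
Proof. by case: m' / em; case: n' / en; rewrite !castmx_id. Qed.

End TensorProduct.

Lemma castmx_mulmx (K : pzRingType) m m' (e : m = m') (A B : 'M[K]_m) :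
  castmx (e, e) (A *m B) = castmx (e, e) A *m castmx (e, e) B.
Proof. by case: m' / e; rewrite !castmx_id. Qed.

Lemma castmx_mulmx_eqN (K : pzRingType) r k k' (e : k = k')
    (X : 'M[K]_(r, k')) (A : 'M[K]_k) :
  X *m castmx (e, e) A = - X <->
  castmx (erefl, esym e) X *m A = - castmx (erefl, esym e) X.
Proof. by case: k' / e in X *; rewrite !castmx_id. Qed.

Definition mxslice {T : Type} {r m k : nat} (w : 'M[T]_(r, m * k)) (i : 'I_m)
  : 'M[T]_(r, k) := \matrix_(a, j) w a (mxtens_index (i, j)).

Section Slices.

Variable K : comPzRingType.

Lemma sum_mxtens_index m k (G : 'I_(m * k) -> K) :
  \sum_l G l = \sum_i \sum_j G (mxtens_index (i, j)).
Proof.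
rewrite pair_big; apply: reindex => /=.
exists (@mxtens_unindex m k) => [[i j] _ | l _]; first by rewrite mxtens_indexK.
by rewrite -surjective_pairing mxtens_unindexK.
Qed.

Lemma mxslice_eq r m k (w w' : 'M[K]_(r, m * k)) :
  (forall i, mxslice w i = mxslice w' i) -> w = w'.
Proof.
move=> eq_w; apply/matrixP => a l; case: (mxtens_indexP l) => i j.
by move/matrixP/(_ a j): (eq_w i); rewrite !mxE.
Qed.

Lemma mxslice_neq0 r m k (w : 'M[K]_(r, m * k)) :
  w != 0 -> exists i, mxslice w i != 0.
Proof.
move=> w_neq0; apply/existsP; apply: contraR w_neq0 => /existsPn w_slices0.
apply/eqP/mxslice_eq => i; move/negPn/eqP: (w_slices0 i) => ->.
by apply/matrixP => a j; rewrite !mxE.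
Qed.

Lemma mxsliceN r m k (w : 'M[K]_(r, m * k)) i : mxslice (- w) i = - mxslice w i.
Proof. by apply/matrixP => a j; rewrite !mxE. Qed.

Lemma mxslice_mul_tens1 r m k l (w : 'M[K]_(r, m * k)) (B : 'M[K]_(k, l)) i :
  mxslice (w *m ((1%:M : 'M_m) *t B)) i = mxslice w i *m B.
Proof.
apply/matrixP => a j; rewrite !mxE sum_mxtens_index (bigD1 i) //=.
rewrite [X in _ + X]big1 ?addr0 => [|i' ne_i'i].
  by apply: eq_bigr => j' _; rewrite tensmxE !mxE eqxx mulr1n mul1r.
by apply: big1 => j' _; rewrite tensmxE mxE (negbTE ne_i'i) mulr0n mul0r mulr0.
Qed.

Lemma mul_tens1mx_eqN r m k (w : 'M[K]_(r, m * k)) (B : 'M[K]_k) :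
  w *m ((1%:M : 'M_m) *t B) = - w <-> forall i, mxslice w i *m B = - mxslice w i.
Proof.
split => [wB i | slicesB]; first by rewrite -mxslice_mul_tens1 wB mxsliceN.
by apply: mxslice_eq => i; rewrite mxslice_mul_tens1 slicesB mxsliceN.
Qed.

Lemma mxslice_tensmx r s m k p (w : 'M[K]_(r, m * k)) (C : 'M[K]_(s, p)) i :
  mxslice (castmx (erefl, esym (mulnA m k p)) (w *t C)) i = mxslice w i *t C.
Proof.
apply/matrixP => a l.
case: (mxtens_indexP a) => a1 a2; case: (mxtens_indexP l) => j c.
rewrite tensmxE !mxE castmxE esymK cast_ord_id.
have -> : cast_ord (mulnA m k p) (mxtens_index (i, mxtens_index (j, c)))
          = mxtens_index (mxtens_index (i, j), c).
  by apply: val_inj; rewrite /= mulnDl mulnA addnA.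
by rewrite tensmxE.
Qed.

Lemma mxslice_slice r m k p (w : 'M[K]_(r, m * k * p)) i j :
  mxslice (mxslice (castmx (erefl, esym (mulnA m k p)) w) i) j
  = mxslice w (mxtens_index (i, j)).
Proof.
apply/matrixP => a c; rewrite !mxE castmxE esymK cast_ord_id.
by congr (w a _); apply: val_inj; rewrite /= mulnDl mulnA addnA.
Qed.

End Slices.

Lemma mxrank_tens1mx (F : fieldType) k n (b : 'rV[F]_k) :
  b != 0 -> \rank (b *t (1%:M : 'M_n)) = n.
Proof.
move=> b_neq0.
have /row_freeP[c bc] : row_free b by rewrite /row_free rank_rV b_neq0.
have : row_free (b *t (1%:M : 'M_n)).
  apply/row_freeP; exists (c *t 1%:M).
  by rewrite tensmx_mul bc mulmx1 scalar_tensmx mulr1.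
by rewrite /row_free => /eqP ->; rewrite mul1n.
Qed.

Definition hecke_quadratic {F : fieldType} (q : F) {k} (A : 'M[F]_k) :=
  (A - q%:M) *m (A + 1%:M) = 0.

Definition antisym3 {F : fieldType} (q : F) {k} (A B : 'M[F]_k) : 'M[F]_k :=
  q ^+ 3 *: 1%:M - q ^+ 2 *: (A + B) + q *: (A *m B + B *m A) - A *m B *m A.

Section HeckeRelations.

Context {F : fieldType} {q : F}.

Lemma hecke_quadratic_tensl k m (A : 'M[F]_k) :
  hecke_quadratic q A -> hecke_quadratic q (A *t (1%:M : 'M_m)).
Proof.
rewrite /hecke_quadratic => hA.
have tens1 (a : F) : a%:M = (a%:M : 'M_k) *t (1%:M : 'M_m).
  by rewrite scalar_tensmx mulr1.
rewrite (tens1 q) (tens1 1) -tensmxBl -tensmxDl.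
by rewrite tensmx_mul hA mulmx1 tens0mx.
Qed.

Lemma hecke_quadratic_tensr k m (A : 'M[F]_k) :
  hecke_quadratic q A -> hecke_quadratic q ((1%:M : 'M_m) *t A).
Proof.
rewrite /hecke_quadratic => hA.
have tens1 (a : F) : a%:M = (1%:M : 'M_m) *t (a%:M : 'M_k).
  by rewrite scalar_tensmx mul1r.
rewrite (tens1 q) (tens1 1) -tensmxBr -tensmxDr.
by rewrite tensmx_mul hA mulmx1 tensmx0.
Qed.

Lemma hecke_quadratic_castmx k k' (e : k = k') (A : 'M[F]_k) :
  hecke_quadratic q A -> hecke_quadratic q (castmx (e, e) A).
Proof. by case: k' / e; rewrite castmx_id. Qed.

Lemma hecke_quadratic_eqN r k (A : 'M[F]_k) (w : 'M[F]_(r, k)) :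
  hecke_quadratic q A -> (w <= A - q%:M)%MS -> w *m A = - w.
Proof.
move=> hA /submxP[y ->].
have /eqP : y *m ((A - q%:M) *m (A + 1%:M)) = 0 by rewrite hA mulmx0.
by rewrite mulmxA mulmxDr mulmx1 addr_eq0 => /eqP.
Qed.

Lemma eqN_submx r k (A : 'M[F]_k) (w : 'M[F]_(r, k)) :
  q + 1 != 0 -> w *m A = - w -> (w <= A - q%:M)%MS.
Proof.
move=> q1_neq0 wA.
have wAq : w *m (A - q%:M) = - (q + 1) *: w.
  by rewrite mulmxBr wA mul_mx_scalar scaleNr scalerDl scale1r opprD addrC.
have q1N_neq0 : - (q + 1) != 0 by rewrite oppr_eq0.
by rewrite -[w](scalerK q1N_neq0) -wAq scalemx_sub ?submxMl.
Qed.

Lemma cube_root_addr1_neq0 : q ^+ 2 + q + 1 = 0 -> q + 1 != 0.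
Proof.
move=> q3; apply/eqP => q1_eq0; move: q3.
have -> : q ^+ 2 + q + 1 = q * (q + 1) + 1 by ring.
by rewrite q1_eq0 mulr0 add0r; apply/eqP; exact: oner_neq0.
Qed.

Lemma mulmx_antisym3 r k (X : 'M[F]_(r, k)) (A B : 'M[F]_k) :
  X *m antisym3 q A B = q ^+ 3 *: X - q ^+ 2 *: (X *m A + X *m B)
                      + q *: (X *m A *m B + X *m B *m A) - X *m A *m B *m A.
Proof.
by rewrite /antisym3 !mulmxBr !mulmxDr mulmxN -!scalemxAr !mulmxDr mulmx1 !mulmxA.
Qed.

Lemma antisym3_factor k (A B : 'M[F]_k) :
  antisym3 q A B = (q%:M - A) *m ((q ^+ 2)%:M - q *: B + B *m A).
Proof.
rewrite mulmxBl mul_scalar_mx !mulmxDr mulmxN -scalemxAr mul_mx_scalar !mulmxA.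
rewrite /antisym3; move: (A *m B *m A) => ABA; move: (A *m B) (B *m A) => AB BA.
by apply/matrixP => i j; rewrite !mxE -mulr_natr; ring.
Qed.

Lemma antisym3_tens1 m k (A B : 'M[F]_k) :
  (1%:M : 'M_m) *t antisym3 q A B = antisym3 q (1%:M *t A) (1%:M *t B).
Proof.
rewrite /antisym3 !(tensmxBr, tensmxDr, tensmxZr) !tensmx_mul !mul1mx.
by rewrite scalar_tensmx mulr1.
Qed.

Lemma antisym3_castmx k k' (e : k = k') (A B : 'M[F]_k) :
  castmx (e, e) (antisym3 q A B)
  = antisym3 q (castmx (e, e) A) (castmx (e, e) B).
Proof. by case: k' / e; rewrite !castmx_id. Qed.

Lemma cube_root_of_antisym3_eq0 r k (A B : 'M[F]_k) (u : 'M[F]_(r, k)) :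
  u != 0 -> (u <= A - q%:M)%MS -> u *m A = - u -> u *m B = - u ->
  antisym3 q A B = 0 -> q ^+ 2 + q + 1 = 0.
Proof.
move=> u_neq0 /submxP[y def_u] uA uB y3_0.
have yqA : y *m (q%:M - A) = - u by rewrite def_u -mulmxN opprB.
have : y *m antisym3 q A B = - ((q ^+ 2 + q + 1) *: u).
  rewrite antisym3_factor mulmxA yqA mulNmx !mulmxDr mulmxN -scalemxAr.
  rewrite mul_mx_scalar mulmxA uB mulNmx uA.
  by apply/matrixP => i j; rewrite !mxE; ring.
rewrite y3_0 mulmx0 => /esym/eqP.
by rewrite oppr_eq0 scaler_eq0 (negbTE u_neq0) orbF => /eqP.
Qed.

Lemma antisym3_braid_eqN r k (X : 'M[F]_(r, k)) (S1 S2 S3 : 'M[F]_k) :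
  q ^+ 2 + q + 1 = 0 ->
  S1 *m S2 *m S1 = S2 *m S1 *m S2 -> S1 *m S3 = S3 *m S1 ->
  X *m S1 = - X -> X *m S2 = - X -> X *m antisym3 q S2 S3 = 0 -> X *m S3 = - X.
Proof.
move=> q3 braid12 comm13 XS1 XS2 Xy3.
move defY: (X *m S3) => Y.
have YS1 : Y *m S1 = - Y by rewrite -defY -mulmxA -comm13 mulmxA XS1 mulNmx.
have YS2 : Y *m S2 = q *: Y - q ^+ 2 *: X.
  have : (q + 1) *: (Y *m S2 - (q *: Y - q ^+ 2 *: X)) = X *m antisym3 q S2 S3.
    rewrite mulmx_antisym3 XS2 !mulNmx defY; move: (Y *m S2) => YS2.
    by apply/matrixP => i j; rewrite !mxE; ring.
  rewrite Xy3 => /eqP.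
  by rewrite scaler_eq0 (negbTE (cube_root_addr1_neq0 q3)) subr_eq0 => /eqP.
have := congr1 (mulmx Y) braid12; rewrite !mulmxA.
do 4 rewrite ?(mulNmx, mulmxBl, YS1, YS2, XS1, XS2) -?scalemxAl.
move=> /matrixP braidY; apply/matrixP => i j.
move: (braidY i j); rewrite !mxE => braidYij.
have E : (q ^+ 2 + q) * Y i j - q ^+ 3 * X i j = 0.
  by move/eqP: braidYij; rewrite -subr_eq0 => /eqP <-; ring.
apply/eqP; rewrite -subr_eq0 opprK.
(* [q ^+ 3 = 1] and [q ^+ 2 + q = -1] *)
have -> : Y i j + X i j = - ((q ^+ 2 + q) * Y i j - q ^+ 3 * X i j)
                          + (q ^+ 2 + q + 1) * (Y i j - (q - 1) * X i j).
  by ring.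
by rewrite E q3 oppr0 mul0r addr0.
Qed.

End HeckeRelations.

Section FourthTensorPower.

Context {F : fieldType}.
Variables (n : nat) (q : F) (R : 'M[F]_(n * n)).
Hypothesis braidR : hR1 R *m hR2 R *m hR1 R = hR2 R *m hR1 R *m hR2 R.
Hypothesis antisym3_R : antisym3 q (hR1 R) (hR2 R) = 0.
Hypothesis q3 : q ^+ 2 + q + 1 = 0.

Let S1 : 'M[F]_(n * n * n * n) := hR1 R *t 1%:M.
Let S2 : 'M[F]_(n * n * n * n) := hR2 R *t 1%:M.
Let S3 : 'M[F]_(n * n * n * n) :=
  castmx (mulnA (n * n) n n, mulnA (n * n) n n) (1%:M *t R).

Let e4 : (n * (n * n * n) = n * n * n * n)%N. Proof. by rewrite !mulnA. Qed.

Let S2E : S2 = castmx (e4, e4) (1%:M *t hR1 R).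
Proof.
by rewrite /S2 /hR2 castmx_tensl tensmxA castmx_comp; apply: eq_castmx.
Qed.

Let S3E : S3 = castmx (e4, e4) (1%:M *t hR2 R).
Proof.
have tens11 : (1%:M : 'M[F]_(n * n)) = 1%:M *t 1%:M.
  by rewrite scalar_tensmx mulr1.
rewrite /S3 /hR2 tens11 tensmxA castmx_tensr !castmx_comp; apply: eq_castmx.
Qed.

Let S1S3 : S1 *m S3 = S3 *m S1.
Proof.
rewrite /S1 /S3 /hR1 tensmxA scalar_tensmx mulr1 -!castmx_mulmx.
by rewrite !tensmx_mul !mulmx1 !mul1mx.
Qed.

Lemma mxslice_tens1mx_eqN r (u : 'M[F]_(r, n * n * n)) :
  u *m hR1 R = - u -> u *m hR2 R = - u ->
  forall i, (mxslice u i *t (1%:M : 'M_n)) *m R = - (mxslice u i *t 1%:M).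
Proof.
move=> uR1 uR2; set X := u *t (1%:M : 'M_n).
have XS3 : X *m S3 = - X.
  apply: (@antisym3_braid_eqN _ _ _ _ X S1 S2 S3 q3).
  - by rewrite /S1 /S2 !tensmx_mul !mulmx1 braidR.
  - exact: S1S3.
  - by rewrite /S1 tensmx_mul uR1 mulmx1 tensmxNl.
  - by rewrite /S2 tensmx_mul uR2 mulmx1 tensmxNl.
  - rewrite S2E S3E -antisym3_castmx -antisym3_tens1 antisym3_R.
    by rewrite tensmx0 castmx_const mulmx0.
move=> i; rewrite -mxslice_tensmx.
by move/castmx_mulmx_eqN/mul_tens1mx_eqN: XS3.
Qed.

Lemma tens1mx_sub_Upsilon3 (u : 'rV[F]_(n * n * n)) :
  u != 0 -> u *m hR1 R = - u -> u *m hR2 R = - u ->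
  exists2 b : 'rV[F]_(n * n), b != 0 & (b *t (1%:M : 'M_n) <= Upsilon3 q R)%MS.
Proof.
move=> u_neq0 uR1 uR2; set u' := castmx (erefl, esym (mulnA n n n)) u.
have u'R p : mxslice u' p *m R = - mxslice u' p.
  by move: p; apply/mul_tens1mx_eqN/castmx_mulmx_eqN.
have [p b_neq0] : exists p, mxslice u' p != 0.
  apply: mxslice_neq0; apply: contraNneq u_neq0 => u'0.
  by rewrite -(castmxK erefl (esym (mulnA n n n)) u) -/u' u'0 castmx_const.
exists (mxslice u' p) => //.
rewrite sub_capmx; apply/andP.
split; apply: eqN_submx (cube_root_addr1_neq0 q3) _.
  by rewrite tensmx_mul u'R mulmx1 tensmxNl.
apply/castmx_mulmx_eqN/mul_tens1mx_eqN => a.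
by rewrite mxslice_tensmx mxslice_slice mxslice_tens1mx_eqN.
Qed.

End FourthTensorPower.

Theorem corollary2p7 (F : fieldType) (n : nat) (q : F) (R : 'M[F]_(n * n)) :
  (1 < n)%N -> q != 0 -> is_hecke_symmetry q R ->
  \rank (Upsilon3 q R) = 1%N ->
  y3_action q R != 0.
Proof.
move=> n_gt1 _ [braidR quadR] rank1; apply/eqP => y3_0.
have quadR1 : hecke_quadratic q (hR1 R) by apply: hecke_quadratic_tensl.
have quadR2 : hecke_quadratic q (hR2 R).
  by apply/hecke_quadratic_castmx/hecke_quadratic_tensr.
set u := nz_row (Upsilon3 q R).
have u_neq0 : u != 0 by rewrite nz_row_eq0 -mxrank_eq0 rank1.
have /andP[u_im1 u_im2] : (u <= hR1 R - q%:M)%MS && (u <= hR2 R - q%:M)%MS.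
  by rewrite -sub_capmx nz_row_sub.
have uR1 := hecke_quadratic_eqN quadR1 u_im1.
have uR2 := hecke_quadratic_eqN quadR2 u_im2.
have q3 := cube_root_of_antisym3_eq0 u_neq0 u_im1 uR1 uR2 y3_0.
have [b b_neq0 b_sub] := tens1mx_sub_Upsilon3 braidR y3_0 q3 u_neq0 uR1 uR2.
by move: (mxrankS b_sub); rewrite mxrank_tens1mx // rank1 leqNgt n_gt1.
Qed.
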